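(* Let $q$ be a prime power, $m>1$ an integer, and $k\ge 1$ an integer. For $1\le i\le k$, let $\gamma_i\in \mathbf{F}_{q^m}$ and let $L_i(x)\in \mathbf{F}_q[x]$ and $B(x)\in\mathbf{F}_q[x]$ be linearized polynomials. Let $h_i(x)\in \mathbf{F}_{q^m}[x]$ be such that $h_i(B(\mathbf{F}_{q^m}))\subseteq \mathbf{F}_q$ for each $i$. Then $$F(x):=\sum_{i=1}^k\bigl(L_i(x)+\gamma_i\bigr)h_i(B(x))$$ is a permutation polynomial of $\mathbf{F}_{q^m}$ if and only if both of the following hold: (1) the polynomial $\sum_{i=1}^k\bigl(L_i(x)+B(\gamma_i)\bigr)h_i(x)$ permutes the set $B(\mathbf{F}_{q^m})$; (2) for every $y\in B(\mathbf{F}_{q^m})$, an element $x\in\mathbf{F}_{q^m}$ satisfies both $\sum_{i=1}^k L_i(x)h_i(y)=0$ and $B(x)=0$ if and only if $x=0$.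
   Context: A linearized polynomial over a field $K\supseteq\mathbf{F}_q$ (here with coefficients in $\mathbf{F}_q$) is a polynomial of the form $\sum_{i=0}^{m-1}a_i x^{q^i}$. For a polynomial $g$ and $S\subseteq\mathbf{F}_{q^m}$, $g(S)=\{g(s):s\in S\}$. A polynomial $f\in\mathbf{F}_{q^m}[x]$ is a permutation polynomial of $\mathbf{F}_{q^m}$ if $x\mapsto f(x)$ is a bijection of $\mathbf{F}_{q^m}$; a polynomial permutes a set $S$ if it maps $S$ bijectively onto $S$. *)

From HB Require Import structures.
From mathcomp Require Import all_boot all_order all_algebra all_field.
Set Implicit Arguments. Unset Strict Implicit. Unset Printing Implicit Defensive.
Import GRing.Theory.
Local Open Scope ring_scope.

(* The subfield F_q of a finite field K with #|K| = q^m: the elements fixed by x |-> x^q. *)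
Definition Fq (K : finFieldType) (q : nat) : pred K := fun x => x ^+ q == x.

Definition linearized (K : finFieldType) (q m : nat) (p : {poly K}) : Prop :=
  exists a : 'I_m -> K, (forall i, a i \in @Fq K q) /\
    p = \sum_(i < m) a i *: 'X^(q ^ i).

Definition img (K : finFieldType) (g : {poly K}) (S : {set K}) : {set K} :=
  [set g.[s] | s in S].

Definition perm_poly (K : finFieldType) (f : {poly K}) : Prop :=
  bijective (fun x : K => f.[x]).

Definition permutes_set (K : finFieldType) (g : {poly K}) (S : {set K}) : Prop :=
  [/\ {in S, forall x, g.[x] \in S},
      {in S &, injective (fun x => g.[x])} &
      {in S, forall y, exists2 x, x \in S & g.[x] = y}].

(* Since B is F_q-linear and commutes with every linearized L_i, and h_i(B(x)) lies
   in F_q, applying B to F gives B(F(x)) = G(B(x)) with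
   G = sum_i (L_i + B(gamma_i)) h_i.  So F maps the fibre of B over y into the fibre
   over G(y), and F is a bijection iff G permutes the set of fibres B(F_{q^m}) and F
   is injective on each fibre.  Two points x, x' of one fibre differ by an element
   of ker B, and F(x) - F(x') = sum_i L_i(x - x') h_i(y), so injectivity on the
   fibre over y is exactly condition (2). *)
From HB Require Import structures.
From mathcomp Require Import all_boot all_order all_algebra all_field.
Import GRing.Theory.
Local Open Scope ring_scope.
Set Implicit Arguments. Unset Strict Implicit.

Section QPowers.
Variables (K : finFieldType) (q : nat).
Hypothesis charq : [pchar K].-nat q.

Lemma q_gt0 : (0 < q)%N.
Proof. by case/andP: charq. Qed.

Lemma exprDqX j (x y : K) : (x + y) ^+ (q ^ j) = x ^+ (q ^ j) + y ^+ (q ^ j).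
Proof. by apply: exprDn_pchar; rewrite pnatX charq. Qed.

Lemma exprqX_sum j (I : Type) (r : seq I) (F : I -> K) :
  (\sum_(i <- r) F i) ^+ (q ^ j) = \sum_(i <- r) F i ^+ (q ^ j).
Proof.
apply: (big_morph (fun z => z ^+ (q ^ j)) (exprDqX j)).
by rewrite expr0n expn_eq0 (gtn_eqF q_gt0).
Qed.

Lemma Fq_exprqX j (c : K) : c \in Fq q -> c ^+ (q ^ j) = c.
Proof.
move=> /eqP cq; elim: j => [|j IHj]; first by rewrite expr1.
by rewrite expnSr exprM IHj cq.
Qed.

End QPowers.

Section Linearized.
Variables (K : finFieldType) (q m : nat).
Hypothesis charq : [pchar K].-nat q.

Lemma horner_linearized (L : {poly K}) : linearized q m L ->
  exists2 a : 'I_m -> K, (forall i, a i \in Fq q) &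
    forall x, L.[x] = \sum_(i < m) a i * x ^+ (q ^ i).
Proof.
move=> [a [Fq_a ->]]; exists a => // x.
by rewrite horner_sum; apply: eq_bigr => i _; rewrite hornerZ hornerXn.
Qed.

Variable L : {poly K}.
Hypothesis linL : linearized q m L.

Lemma horner_linD x y : L.[x + y] = L.[x] + L.[y].
Proof.
have [a _ La] := horner_linearized linL; rewrite !La -big_split /=.
by apply: eq_bigr => i _; rewrite exprDqX // mulrDr.
Qed.

Lemma horner_lin0 : L.[0] = 0.
Proof. by apply: (@addIr _ L.[0]); rewrite -horner_linD !add0r. Qed.

Lemma horner_linB x y : L.[x - y] = L.[x] - L.[y].
Proof. by apply/eqP; rewrite eq_sym subr_eq -horner_linD subrK. Qed.

Lemma horner_lin_sum (I : Type) (r : seq I) (F : I -> K) :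
  L.[\sum_(i <- r) F i] = \sum_(i <- r) L.[F i].
Proof. exact: (big_morph _ horner_linD horner_lin0). Qed.

Lemma horner_linZ c x : c \in Fq q -> L.[c * x] = c * L.[x].
Proof.
move=> Fq_c; have [a _ La] := horner_linearized linL; rewrite !La mulr_sumr.
by apply: eq_bigr => i _; rewrite exprMn Fq_exprqX // mulrCA.
Qed.

Lemma horner_linXq j x : L.[x ^+ (q ^ j)] = L.[x] ^+ (q ^ j).
Proof.
have [a Fq_a La] := horner_linearized linL; rewrite !La exprqX_sum //.
by apply: eq_bigr => i _; rewrite exprMn (Fq_exprqX _ (Fq_a i)) -!exprM mulnC.
Qed.

Lemma horner_lin_comm (B : {poly K}) : linearized q m B ->
  forall x, B.[L.[x]] = L.[B.[x]].
Proof.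
move=> linB x; have [b Fq_b Bb] := horner_linearized linB; rewrite !Bb.
rewrite horner_lin_sum; apply: eq_bigr => j _.
by rewrite horner_linZ // horner_linXq.
Qed.

End Linearized.

Lemma surj_in_injective (T : finType) (S : {set T}) (g : T -> T) :
  {in S, forall x, g x \in S} -> {in S, forall y, exists2 x, x \in S & g x = y} ->
  {in S &, injective g}.
Proof.
move=> gS g_onto; apply/imset_injP; suff -> : g @: S = S by [].
apply/eqP; rewrite eqEsubset; apply/andP; split.
  by apply/subsetP => _ /imsetP [x Sx ->]; apply: gS.
by apply/subsetP => y Sy; have [x Sx <-] := g_onto y Sy; apply: imset_f.
Qed.

Section Criterion.
Variables (K : finFieldType) (q m k : nat).
Hypothesis charq : [pchar K].-nat q.
Variables (gamma : 'I_k -> K) (L h : 'I_k -> {poly K}) (B : {poly K}).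
Hypotheses (linL : forall i, linearized q m (L i)) (linB : linearized q m B).
Hypothesis Fq_hB : forall i, {subset img (h i) (img B [set: K]) <= Fq q}.

Local Notation F := (\sum_(i < k) (L i + (gamma i)%:P) * (h i \Po B)).
Local Notation G := (\sum_(i < k) (L i + (B.[gamma i])%:P) * h i).
Local Notation S := (img B [set: K]).

Lemma horner_img x : B.[x] \in S.
Proof. by apply: imset_f; rewrite inE. Qed.

Lemma horner_F x : F.[x] = \sum_(i < k) ((L i).[x] + gamma i) * (h i).[B.[x]].
Proof.
rewrite horner_sum; apply: eq_bigr => i _.
by rewrite hornerM hornerD hornerC horner_comp.
Qed.

Lemma horner_B_F x : B.[F.[x]] = G.[B.[x]].
Proof.
rewrite horner_F horner_sum (horner_lin_sum charq linB); apply: eq_bigr => i _.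
have Fq_hBx : (h i).[B.[x]] \in Fq q by apply/Fq_hB/imset_f/horner_img.
rewrite mulrC (horner_linZ linB) // (horner_linD charq linB).
by rewrite (horner_lin_comm charq (linL i)) // hornerM hornerD hornerC mulrC.
Qed.

Lemma horner_F_fibreB x x' : B.[x] = B.[x'] ->
  F.[x] - F.[x'] = \sum_(i < k) (L i).[x - x'] * (h i).[B.[x]].
Proof.
move=> Bxx'; rewrite !horner_F Bxx' -sumrB; apply: eq_bigr => i _.
by rewrite -mulrBl (horner_linB charq (linL i)) opprD addrACA subrr addr0.
Qed.

Lemma perm_poly_permutes_img : perm_poly F -> permutes_set G S.
Proof.
move=> [f' Ff' f'F].
have GS : {in S, forall y, G.[y] \in S}.
  by move=> _ /imsetP [x _ ->]; rewrite -horner_B_F horner_img.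
have G_onto : {in S, forall y, exists2 x, x \in S & G.[x] = y}.
  move=> _ /imsetP [w _ ->]; exists B.[f' w]; first exact: horner_img.
  by rewrite -horner_B_F f'F.
by split => //; apply: surj_in_injective.
Qed.

Lemma perm_poly_kernel_trivial : perm_poly F ->
  forall y, y \in S -> forall x : K,
    ((\sum_(i < k) (L i).[x] * (h i).[y] == 0) && (B.[x] == 0)) <-> x = 0.
Proof.
move=> [f' Ff' _] _ /imsetP [x0 _ ->] x; split; last first.
  move=> ->; rewrite (horner_lin0 charq linB) eqxx andbT big1 //.
  by move=> i _; rewrite (horner_lin0 charq (linL i)) mul0r.
case/andP => /eqP sum0 /eqP Bx0.
have Bx0x : B.[x + x0] = B.[x0] by rewrite (horner_linD charq linB) Bx0 add0r.
move/eqP: (horner_F_fibreB Bx0x); rewrite Bx0x addrK sum0 subr_eq0.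
by move=> /eqP /(can_inj Ff') /(congr1 (fun z => z - x0)); rewrite addrK subrr.
Qed.

Lemma perm_poly_of_permutes_img : permutes_set G S ->
  (forall y, y \in S -> forall x : K,
    ((\sum_(i < k) (L i).[x] * (h i).[y] == 0) && (B.[x] == 0)) <-> x = 0) ->
  perm_poly F.
Proof.
move=> [_ G_inj _] kerG; apply: injF_bij => x x' Fxx'.
have Bxx' : B.[x] = B.[x'] by apply: G_inj; rewrite ?horner_img // -!horner_B_F Fxx'.
have sum0 := horner_F_fibreB Bxx'; rewrite Fxx' subrr in sum0.
have Bx_x' : B.[x - x'] == 0 by rewrite (horner_linB charq linB) Bxx' subrr.
apply/eqP; rewrite -subr_eq0; apply/eqP.
by apply: (kerG _ (horner_img x) (x - x')).1; rewrite -sum0 eqxx Bx_x'.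
Qed.

End Criterion.

Unset Implicit Arguments.
Theorem theorem2p1 (K : finFieldType) (q m k : nat)
  (Hq : exists p n : nat, [/\ prime p, (0 < n)%N & q = (p ^ n)%N])
  (HK : #|K| = (q ^ m)%N) (Hm : (1 < m)%N) (Hk : (1 <= k)%N)
  (gamma : 'I_k -> K) (L h : 'I_k -> {poly K}) (B : {poly K})
  (HL : forall i, linearized q m (L i)) (HB : linearized q m B)
  (Hh : forall i, {subset img (h i) (img B [set: K]) <= @Fq K q}) :
  perm_poly (\sum_(i < k) (L i + (gamma i)%:P) * (h i \Po B)) <->
  (permutes_set (\sum_(i < k) (L i + (B.[gamma i])%:P) * h i) (img B [set: K]) /\
   forall y, y \in img B [set: K] -> forall x : K,
     ((\sum_(i < k) (L i).[x] * (h i).[y] == 0) && (B.[x] == 0)) <-> x = 0).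
Proof.
have [p [n [p_pr _ qE]]] := Hq.
have charK : p \in [pchar K].
  by apply: (card_finPcharP (n := (n * m)%N)) => //; rewrite HK qE expnM.
have charq : [pchar K].-nat q.
  by rewrite qE pnatX (eq_pnat _ (pcharf_eq charK)) pnat_id.
split=> [permF | [permG kerG]].
- split; first exact: (perm_poly_permutes_img charq HL HB Hh).
  by move=> y; apply: (perm_poly_kernel_trivial charq HL HB permF).
- exact: (perm_poly_of_permutes_img charq HL HB Hh).
Qed.
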